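(* Let $N\ge2$, $n\ge1$, $\tilde J>0$ and $J_i=\tilde J/N^i$ for $1\le i\le n$. For all integers $1\le s\le N$ and $0\le m\le n-1$, $$\max_{1\le i\le N^n}\mathcal H\big(h^{(m,s)};\gamma_i\big)=\max_{1\le i\le sN^m}\mathcal H\big(h^{(m,s)};\gamma_i\big).$$
   Context: Hierarchical lattice $\Lambda_N^n=\{1,\dots,N^n\}$ (integer $a$ = vertex $v_a$); $k$-blocks are $\{jN^k+1,\dots,(j+1)N^k\}$; $d(a,b)$ is the smallest $k\ge0$ with $a,b$ in a common $k$-block. For a field $h$, $\mathcal H(h;\sigma)=-\frac12\sum_{\{v,w\},v\ne w}J_{d(v,w)}\sigma(v)\sigma(w)-\frac h2\sum_v\sigma(v)$ (unordered pairs). $\gamma_k$ is the configuration with $+1$ exactly on $\{1,\dots,k\}$. For integers $m,s$, $h^{(m,s)}=\tilde J\big[(1-\frac1N)(n-m)-(s-1)\frac1N\big]$. *)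

From HB Require Import structures.
From mathcomp Require Import all_boot all_order all_algebra.
Set Implicit Arguments. Unset Strict Implicit. Unset Printing Implicit Defensive.
Import Order.TTheory GRing.Theory Num.Theory.
Local Open Scope ring_scope.

(* Vertices of Lambda_N^n are encoded 0-based: the ordinal a : 'I_(N^n)
   stands for the vertex v_{a+1}.  k-blocks {jN^k+1,...,(j+1)N^k} thus
   correspond to 0-based indices with equal quotient by N^k. *)

Definition hdist (N n : nat) (a b : nat) : nat :=
  \big[minn/n]_(k < n.+1 | (a %/ N ^ k == b %/ N ^ k)%N) (k : nat).

Definition coupling {R : realFieldType} (N : nat) (Jt : R) (i : nat) : R :=
  Jt / (N%:R ^+ i).

Definition hamiltonian {R : realFieldType} (N n : nat) (Jt h : R)
    (sigma : 'I_(N ^ n) -> R) : R :=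
  - (1 / 2) * (\sum_(v < N ^ n) \sum_(w < N ^ n | (v < w)%N)
        coupling N Jt (hdist N n v w) * sigma v * sigma w)
  - h / 2 * \sum_(v < N ^ n) sigma v.

(* gamma_k : +1 exactly on the vertices v_1..v_k, i.e. 0-based indices < k *)
Definition gamma {R : realFieldType} (N n k : nat) (v : 'I_(N ^ n)) : R :=
  if (v < k)%N then 1 else -1.

Definition hfield {R : realFieldType} (N n : nat) (Jt : R) (m s : nat) : R :=
  Jt * ((1 - 1 / N%:R) * (n%:R - m%:R) - (s%:R - 1) / N%:R).

(* max_{lo <= i <= hi} H(h; gamma_i), as an iterated Num.max seeded with
   H(h; gamma_lo) (the ranges used below are nonempty and contain lo). *)
Definition maxH {R : realFieldType} (N n : nat) (Jt h : R) (lo hi : nat) : R :=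
  \big[Num.max/@hamiltonian R N n Jt h (@gamma R N n lo)]_(lo <= i < hi.+1)
     @hamiltonian R N n Jt h (@gamma R N n i).

From HB Require Import structures.
From mathcomp Require Import all_boot all_order all_algebra.
From mathcomp Require Import zify ring lra.
Import Order.TTheory GRing.Theory Num.Theory.
Local Open Scope ring_scope.

(* Write E(k) := G(k) - h k, where G(k) = sum_{v < k <= w} J_{d(v,w)} is the weight of
   the cut of the chain at k; then H(h; gamma_k) = H(h; gamma_0) + E(k).  Expanding
   J_d = sum_{d <= l <= n} c_l with c_l = J_l - J_{l+1} (and J_{n+1} = 0) and counting
   the cut pairs inside each l-block gives G(k) = sum_l c_l r_l (N^l - r_l), r_l = k mod N^l.
   With c_l N^l = J~ (1 - 1/N) for l < n, this closed form shows that, for h = h^(m,s),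
   E does not decrease when k is replaced by k mod N^(m+1), then (if still k >= s N^m)
   by (s-1) N^m + k mod N^m, and finally 0 by 1.  So every gamma_i is beaten by some
   gamma_j with 1 <= j <= s N^m. *)

Section Blocks.
Local Open Scope nat_scope.

Lemma sum_ord_between (M a b : nat) :
  \sum_(v < M) ((a <= v < b) : nat) = minn b M - a.
Proof.
elim: M => [|M IH]; first by rewrite big_ord0 minn0.
by rewrite big_ord_recr /= IH; case: (leqP a M); case: (ltnP M b); lia.
Qed.

Definition cut_pairs (P k : nat) : nat := k %% P * (P - k %% P).

Lemma sum_cut_same_block (M P k : nat) : 0 < P -> P %| M -> k <= M ->
  \sum_(v < M) \sum_(w < M) ([&& v < k, k <= w & v %/ P == w %/ P] : nat) =
  cut_pairs P k.
Proof.
move=> P_gt0 /dvdnP[t ->] k_le; rewrite /cut_pairs.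
set q := k %/ P; set r := k %% P.
have k_eq : k = q * P + r by exact: divn_eq.
have r_lt : r < P by rewrite ltn_pmod.
have factor v w : [&& v < k, k <= w & v %/ P == w %/ P] =
    ((q * P <= v < k) && ((k <= w < q.+1 * P))).
  case: (ltnP v k) => v_lt; case: (leqP k w) => w_ge; rewrite /= ?andbF ?andbT //.
  have := leq_div2r P (ltnW v_lt); have := leq_div2r P w_ge.
  rewrite -leq_divRL // -ltn_divLR // ltnS -/q; lia.
under eq_bigr do under eq_bigr do rewrite factor -mulnb.
rewrite -big_distrlr /= !sum_ord_between (minn_idPl k_le).
have -> : k - q * P = r by lia.
have [->|r_gt0] := posnP r; first by rewrite !mul0n.
have : q < t by rewrite -(ltn_pmul2r P_gt0); lia.
rewrite -(leq_pmul2r P_gt0) => le_qt.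
rewrite (minn_idPl le_qt); lia.
Qed.

Lemma same_block_pow_le (N k l a b : nat) : k <= l ->
  a %/ N ^ k = b %/ N ^ k -> a %/ N ^ l = b %/ N ^ l.
Proof. by move=> /subnKC <- eq_ab; rewrite expnD !divnMA eq_ab. Qed.

Lemma hdist_leq (N n a b l : nat) : a < N ^ n -> b < N ^ n -> l <= n ->
  (hdist N n a b <= l) = (a %/ N ^ l == b %/ N ^ l).
Proof.
move=> a_lt b_lt l_le; rewrite /hdist; apply/idP/idP.
- elim/big_ind: _ => [n_le|x y IHx IHy|i /eqP same_i i_le].
  + by rewrite (@anti_leq l n) ?l_le // !divn_small.
  + by rewrite geq_min => /orP[/IHx|/IHy].
  + by apply/eqP; exact: same_block_pow_le same_i.
- move=> same_l; have l_lt : l < n.+1 by [].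
  rewrite -minEnat.
  exact: (bigmin_le_cond _ (fun k : 'I_n.+1 => k : nat) (j := Ordinal l_lt) same_l).
Qed.

End Blocks.

Section CutEnergy.
Variables (R : realFieldType) (N n : nat) (Jt : R).
Hypothesis N_gt0 : (0 < N)%N.

Let N_neq0 : N%:R != 0 :> R. Proof. by rewrite pnatr_eq0 -lt0n. Qed.

Lemma couplingS l : coupling N Jt l.+1 = coupling N Jt l / N%:R.
Proof. by rewrite /coupling exprSr invfM mulrA. Qed.

Lemma coupling_mul_pow l : coupling N Jt l * (N ^ l)%:R = Jt.
Proof. by rewrite /coupling natrX divfK // expf_neq0. Qed.

Definition coupling_trunc (l : nat) : R :=
  if (l <= n)%N then coupling N Jt l else 0.

Definition coupling_gap (l : nat) : R := coupling_trunc l - coupling_trunc l.+1.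

Lemma sum_coupling_gap j : (j <= n)%N ->
  \sum_(j <= l < n.+1) coupling_gap l = coupling N Jt j.
Proof.
move=> j_le; rewrite (telescope_sumr_eq (fun l => - coupling_trunc l)) => [||l _].
- by rewrite /coupling_trunc ltnn j_le oppr0 opprK add0r.
- exact: leqW.
- by rewrite /coupling_gap opprK addrC.
Qed.

Lemma coupling_sum_gap d : (d <= n)%N ->
  coupling N Jt d = \sum_(0 <= l < n.+1) (d <= l)%:R * coupling_gap l.
Proof.
move=> d_le; rewrite (@big_cat_nat _ _ _ d) ?leqW //= big1_seq ?add0r => [|l].
  by rewrite -sum_coupling_gap //; apply: eq_big_nat => l /andP[-> _]; rewrite mul1r.
by rewrite mem_index_iota => /andP[_ /ltn_geF ->]; rewrite mul0r.
Qed.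

Lemma coupling_gap_mul_pow l : (l < n)%N ->
  coupling_gap l * (N ^ l)%:R = Jt - Jt / N%:R.
Proof.
move=> l_lt; rewrite /coupling_gap /coupling_trunc ltnW // l_lt couplingS.
by rewrite mulrBl coupling_mul_pow mulrAC coupling_mul_pow.
Qed.

Lemma coupling_gap_mul_pow_top : coupling_gap n * (N ^ n)%:R = Jt.
Proof. by rewrite /coupling_gap /coupling_trunc leqnn ltnn subr0 coupling_mul_pow. Qed.

Lemma sum_coupling_gap_tail_mul_pow j : (j < n)%N ->
  (\sum_(j.+1 <= l < n.+1) coupling_gap l) * (N ^ j)%:R = Jt / N%:R.
Proof. by move=> j_lt; rewrite sum_coupling_gap // couplingS mulrAC coupling_mul_pow. Qed.

Lemma sum_coupling_gap_pow_sub j : (j <= n)%N ->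
  \sum_(j.+1 <= l < n.+1) coupling_gap l * ((N ^ l)%:R - (N ^ j)%:R) =
  (n - j)%:R * (Jt - Jt / N%:R).
Proof.
rewrite leq_eqVlt => /orP[/eqP-> | j_lt]; first by rewrite big_geq // subnn mul0r.
under eq_bigr do rewrite mulrBr.
rewrite sumrB -mulr_suml sum_coupling_gap_tail_mul_pow // big_nat_recr /=; last by lia.
rewrite coupling_gap_mul_pow_top.
rewrite (eq_big_nat _ _ (F2 := fun=> Jt - Jt / N%:R)); last first.
  by move=> l /andP[_ l_lt]; rewrite coupling_gap_mul_pow.
rewrite sumr_const_nat mulr_natl.
have -> : (n - j)%N = (n - j.+1).+1 by lia.
by rewrite mulrSr addrA.
Qed.

Definition cut_weight (k : nat) : R :=
  \sum_(0 <= l < n.+1) coupling_gap l * (cut_pairs (N ^ l) k)%:R.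

Definition energy (h : R) (k : nat) : R := cut_weight k - h * k%:R.

Lemma cut_weight_pairs k : (k <= N ^ n)%N ->
  \sum_(v < N ^ n) \sum_(w < N ^ n | (v < w)%N)
    coupling N Jt (hdist N n v w) * ((v < k) && (k <= w))%N%:R = cut_weight k.
Proof.
move=> k_le.
transitivity (\sum_(v < N ^ n) \sum_(w < N ^ n) \sum_(0 <= l < n.+1)
    coupling_gap l * [&& v < k, k <= w & v %/ N ^ l == w %/ N ^ l]%N%:R).
  apply: eq_bigr => v _; rewrite big_mkcond /=; apply: eq_bigr => w _.
  case: (ltnP v w) => [v_lt_w|w_le_v].
    have hdist_le : (hdist N n v w <= n)%N by rewrite hdist_leq // !divn_small.
    rewrite (coupling_sum_gap _ hdist_le) mulr_suml.
    apply: eq_big_nat => l /andP[_ l_lt]; rewrite hdist_leq //.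
    by rewrite [in RHS]andbA [in RHS]andbC -[in RHS]mulnb natrM; ring.
  rewrite big1 // => l _; case: (ltnP v k) => [v_lt_k|]; last by rewrite mulr0.
  by rewrite leqNgt (leq_ltn_trans w_le_v v_lt_k) mulr0.
under eq_bigr do rewrite exchange_big /=.
rewrite exchange_big /=; apply: eq_big_nat => l /andP[_ l_le].
rewrite -(@sum_cut_same_block (N ^ n)) ?expn_gt0 ?N_gt0 ?dvdn_exp2l //.
by rewrite natr_sum mulr_sumr; apply: eq_bigr => v _; rewrite natr_sum mulr_sumr.
Qed.

Lemma hamiltonian_gamma h k : (k <= N ^ n)%N ->
  @hamiltonian R N n Jt h (@gamma R N n k) =
  @hamiltonian R N n Jt h (@gamma R N n 0) + energy h k.
Proof.
move=> k_le; rewrite /hamiltonian /energy -(cut_weight_pairs _ k_le).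
have pairs : \sum_(v < N ^ n) \sum_(w < N ^ n | (v < w)%N)
      coupling N Jt (hdist N n v w) * @gamma R N n k v * @gamma R N n k w =
    \sum_(v < N ^ n) \sum_(w < N ^ n | (v < w)%N)
      coupling N Jt (hdist N n v w) * @gamma R N n 0 v * @gamma R N n 0 w -
    2 * \sum_(v < N ^ n) \sum_(w < N ^ n | (v < w)%N)
      coupling N Jt (hdist N n v w) * ((v < k) && (k <= w))%N%:R.
  rewrite mulr_sumr -sumrB; apply: eq_bigr => v _.
  rewrite mulr_sumr -sumrB; apply: eq_bigr => w v_lt_w; rewrite /gamma /=.
  by case: (ltnP v k) => v_k; case: (ltnP w k) => w_k /=; [ring | ring | lia | ring].
have spins : \sum_(v < N ^ n) @gamma R N n k v =
    \sum_(v < N ^ n) @gamma R N n 0 v + 2 * k%:R.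
  have count_lt : \sum_(v < N ^ n) ((v < k)%N : nat) = k.
    by rewrite (sum_ord_between _ 0) (minn_idPl k_le) subn0.
  rewrite -[in RHS]count_lt natr_sum.
  rewrite mulr_sumr -big_split /=; apply: eq_bigr => v _.
  by rewrite /gamma ltn0; case: (v < k)%N => /=; ring.
rewrite pairs spins; lra.
Qed.

Lemma cut_pairs_natr P k : (0 < P)%N ->
  (cut_pairs P k)%:R = (k %% P)%:R * (P%:R - (k %% P)%:R) :> R.
Proof. by move=> P_gt0; rewrite /cut_pairs natrM natrB // ltnW // ltn_pmod. Qed.

Lemma mul_compl_sub_le (a b P X : R) : b <= a -> a = b \/ X <= a + b ->
  a * (P - a) - b * (P - b) <= (a - b) * (P - X).
Proof. by move=> b_le [->|X_le]; [rewrite !subrr mul0r | nra]. Qed.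

Hypothesis Jt_ge0 : 0 <= Jt.

Lemma coupling_gap_ge0 l : 0 <= coupling_gap l.
Proof.
have coupling_ge0 k : 0 <= coupling N Jt k.
  by rewrite divr_ge0 // exprn_ge0.
rewrite /coupling_gap /coupling_trunc; case: (ltngtP l n) => [_|_|_].
- rewrite couplingS subr_ge0 ler_pdivrMr ?ltr0n //.
  by rewrite ler_peMr // ler1n.
- by rewrite subrr.
- by rewrite subr0.
Qed.

Lemma energy_le_of_residues j h x k1 k2 : (j <= n)%N -> (k2 <= k1)%N ->
  (forall l, (l <= j)%N -> (k1 %% N ^ l = k2 %% N ^ l)%N) ->
  (forall l, (j < l <= n)%N ->
     (cut_pairs (N ^ l) k1)%:R - (cut_pairs (N ^ l) k2)%:R <=
     (k1%:R - k2%:R) * ((N ^ l)%:R - x)) ->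
  \sum_(j.+1 <= l < n.+1) coupling_gap l * ((N ^ l)%:R - x) <= h ->
  energy h k1 <= energy h k2.
Proof.
move=> j_le k2_le same_low le_high sum_le.
have gap : cut_weight k1 - cut_weight k2 <=
    (k1%:R - k2%:R) * \sum_(j.+1 <= l < n.+1) coupling_gap l * ((N ^ l)%:R - x).
  rewrite /cut_weight -sumrB (@big_cat_nat _ _ _ j.+1) //= big1_seq ?add0r => [|l].
    rewrite mulr_sumr; apply: ler_sum_nat => l /andP[j_lt l_lt].
    by rewrite -mulrBr mulrCA ler_wpM2l ?coupling_gap_ge0 ?le_high ?j_lt.
  by rewrite mem_index_iota => /andP[_ l_le]; rewrite /cut_pairs same_low // subrr.
rewrite /energy -subr_ge0.
have -> : cut_weight k2 - h * k2%:R - (cut_weight k1 - h * k1%:R) =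
    (k1%:R - k2%:R) * h - (cut_weight k1 - cut_weight k2) by ring.
rewrite subr_ge0; apply: le_trans gap _.
by rewrite ler_wpM2l // subr_ge0 ler_nat.
Qed.

Lemma energy_le_mod j h k : (j <= n)%N ->
  (n - j)%:R * (Jt - Jt / N%:R) <= h -> energy h k <= energy h (k %% N ^ j).
Proof.
move=> j_le h_ge; have pow_gt0 l : (0 < N ^ l)%N by rewrite expn_gt0 N_gt0.
apply: (energy_le_of_residues _ _ (N ^ j)%:R _ _ j_le) => [||l /andP[j_lt l_le]|].
- exact: leq_mod.
- by move=> l l_le; rewrite modn_dvdm // dvdn_exp2l.
- have pow_le : (N ^ j <= N ^ l)%N by rewrite leq_pexp2l // ltnW.
  set r := (k %% N ^ l)%N.
  have r_mod : (r %% N ^ j = k %% N ^ j)%N by rewrite modn_dvdm // dvdn_exp2l // ltnW.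
  have kj_lt : (k %% N ^ j < N ^ l)%N by apply: leq_trans pow_le; rewrite ltn_pmod.
  rewrite !cut_pairs_natr // -/r (modn_small kj_lt) -r_mod.
  apply: (le_trans (mul_compl_sub_le _ _ _ (N ^ j)%:R _ _)).
  + by rewrite ler_nat leq_mod.
  (* r and r mod N^j are either equal or sum to at least N^j. *)
  + case: (ltnP r (N ^ j)) => [r_lt|r_ge]; first by left; rewrite modn_small.
    by right; rewrite -natrD ler_nat (leq_trans r_ge) ?leq_addr.
  + by rewrite ler_wpM2r ?subr_ge0 ?ler_nat // lerD2r ler_nat leq_mod.
- by rewrite sum_coupling_gap_pow_sub.
Qed.

Lemma energy_le_digit m t h k : (m < n)%N ->
  (k < N ^ m.+1)%N -> (t.+1 * N ^ m <= k)%N ->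
  (n - m)%:R * (Jt - Jt / N%:R) - t%:R * (Jt / N%:R) <= h ->
  energy h k <= energy h (t * N ^ m + k %% N ^ m).
Proof.
move=> m_lt k_lt k_ge h_ge; have pow_gt0 l : (0 < N ^ l)%N by rewrite expn_gt0 N_gt0.
set k2 := (t * N ^ m + k %% N ^ m)%N.
have k2_ge : (t * N ^ m <= k2)%N by rewrite leq_addr.
have k2_lt : (k2 < k)%N.
  by apply: leq_trans k_ge; rewrite mulSn addnC ltn_add2l ltn_pmod.
apply: (energy_le_of_residues _ _ ((2 * t).+1 * N ^ m)%:R _ _ (ltnW m_lt) (ltnW k2_lt))
    => [l l_le|l /andP[m_lt_l l_le]|].
- rewrite /k2; have /dvdnP[c ->] : (N ^ l %| t * N ^ m)%N.
    by rewrite dvdn_mull // dvdn_exp2l.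
  by rewrite modnMDl modn_dvdm // dvdn_exp2l.
- have k_lt_P : (k < N ^ l)%N by apply: leq_trans k_lt _; rewrite leq_pexp2l.
  rewrite !cut_pairs_natr // !modn_small ?(ltn_trans k2_lt) //.
  apply: mul_compl_sub_le; first by rewrite ler_nat ltnW.
  right; rewrite -natrD ler_nat.
  have -> : ((2 * t).+1 * N ^ m = t.+1 * N ^ m + t * N ^ m)%N.
    by rewrite -mulnDl addSn addnn mul2n.
  exact: leq_add k_ge k2_ge.
- have -> : \sum_(m.+1 <= l < n.+1)
        coupling_gap l * ((N ^ l)%:R - ((2 * t).+1 * N ^ m)%:R) =
      \sum_(m.+1 <= l < n.+1) coupling_gap l * ((N ^ l)%:R - (N ^ m)%:R) -
      2 * t%:R * ((\sum_(m.+1 <= l < n.+1) coupling_gap l) * (N ^ m)%:R).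
    rewrite mulr_suml mulr_sumr -sumrB; apply: eq_bigr => l _.
    by rewrite natrM -nat1r natrM; ring.
  rewrite (sum_coupling_gap_pow_sub _ (ltnW m_lt)) sum_coupling_gap_tail_mul_pow //.
  apply: le_trans h_ge; rewrite lerD2l lerN2 -mulrA.
  by rewrite ler_peMl ?mulr_ge0 ?invr_ge0 ?ler1n.
Qed.

Lemma energy0_le_energy1 h : (1 < N)%N ->
  h <= n%:R * (Jt - Jt / N%:R) -> energy h 0 <= energy h 1.
Proof.
move=> N_gt1 h_le.
have cut0 : cut_weight 0 = 0.
  by rewrite /cut_weight big1 // => l _; rewrite /cut_pairs mod0n mulr0.
have cut1 : cut_weight 1 = n%:R * (Jt - Jt / N%:R).
  rewrite /cut_weight big_ltn // /cut_pairs expn0 modn1 mulr0 add0r.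
  rewrite -[n in RHS]subn0 -(sum_coupling_gap_pow_sub _ (leq0n n)).
  apply: eq_big_nat => l /andP[l_gt0 _].
  have pow_gt1 : (1 < N ^ l)%N by rewrite -{1}(expn0 N) ltn_exp2l.
  by rewrite modn_small // mul1n natrB // ltnW.
by rewrite /energy cut0 cut1 !mulr0 !subr0 mulr1 subr_ge0.
Qed.

Lemma hfield_succ m t :
  hfield N n Jt m t.+1 = (n%:R - m%:R) * (Jt - Jt / N%:R) - t%:R * (Jt / N%:R).
Proof. by rewrite /hfield -natr1 addrK; ring. Qed.

Lemma energy_dominated_by_prefix m t k : (1 < N)%N -> (m < n)%N -> (t < N)%N ->
  exists2 k', (0 < k' <= t.+1 * N ^ m)%N &
    energy (hfield N n Jt m t.+1) k <= energy (hfield N n Jt m t.+1) k'.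
Proof.
move=> N_gt1 m_lt t_lt; set h := hfield N n Jt m t.+1.
have u_ge0 : 0 <= Jt / N%:R by rewrite divr_ge0.
have tu_ge0 : 0 <= t%:R * (Jt / N%:R) by rewrite mulr_ge0.
have u_le : t.+1%:R * (Jt / N%:R) <= Jt.
  by rewrite -[leRHS](divfK N_neq0) mulrC ler_wpM2l // ler_nat.
have h_eq := hfield_succ m t; rewrite -/h -natr1 in h_eq u_le.
have [k1 k1_lt le_k1] : exists2 k1, (k1 < t.+1 * N ^ m)%N & energy h k <= energy h k1.
  have le_mod : energy h k <= energy h (k %% N ^ m.+1).
    by apply: energy_le_mod => //; rewrite natrB // -natr1 h_eq; lra.
  case: (ltnP (k %% N ^ m.+1) (t.+1 * N ^ m)) => [lt|ge].
    by exists (k %% N ^ m.+1)%N.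
  exists (t * N ^ m + k %% N ^ m.+1 %% N ^ m)%N.
    by rewrite mulSn addnC ltn_add2r ltn_pmod ?expn_gt0 ?N_gt0.
  apply: le_trans le_mod (energy_le_digit _ _ _ _ m_lt _ ge _).
    by rewrite ltn_pmod ?expn_gt0 ?N_gt0.
  by rewrite natrB ?(ltnW m_lt) // h_eq.
have [k1_eq0|k1_gt0] := posnP k1; last by exists k1; rewrite ?k1_gt0 ?(ltnW k1_lt).
exists 1%N; first by rewrite muln_gt0 expn_gt0 N_gt0.
apply: le_trans le_k1 _; rewrite k1_eq0; apply: energy0_le_energy1 => //.
have : 0 <= m%:R * (Jt - Jt / N%:R) by rewrite mulr_ge0 // subr_ge0; lra.
by rewrite h_eq; lra.
Qed.

End CutEnergy.

Lemma bigmax_nat_dominated d (T : orderType d) (F : nat -> T) (lo a b : nat) :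
  (lo <= b <= a)%N ->
  (forall i, (lo <= i <= a)%N -> exists2 j, (lo <= j <= b)%N & (F i <= F j)%O) ->
  \big[Order.max/F lo]_(lo <= i < a.+1) F i = \big[Order.max/F lo]_(lo <= i < b.+1) F i.
Proof.
move=> /andP[lo_le b_le] dom; apply/le_anti/andP; split; last exact: le_bigmax_nat.
have lo_in : lo \in index_iota lo b.+1 by rewrite mem_index_iota leqnn ltnS.
rewrite big_seq; apply: bigmax_le => [|i]; first exact: (le_bigmax_seq _ _ _ _ lo_in).
rewrite mem_index_iota ltnS => /dom[j j_in le_ij].
by apply: (bigmax_sup_seq _ j _ _ _ _ _ le_ij); rewrite // mem_index_iota ltnS.
Qed.

Theorem lemma4p3 (R : realFieldType) (N n : nat) (Jt : R)
    (hN : (2 <= N)%N) (hn : (1 <= n)%N) (hJ : 0 < Jt)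
    (s m : nat) (hs1 : (1 <= s)%N) (hs2 : (s <= N)%N) (hm : (m <= n.-1)%N) :
  maxH N n Jt (hfield N n Jt m s) 1 (N ^ n) =
  maxH N n Jt (hfield N n Jt m s) 1 (s * N ^ m).
Proof.
have N_gt0 : (0 < N)%N by exact: ltnW.
have m_lt : (m < n)%N by lia.
case: s hs1 hs2 => // t _ t_lt.
have block_le : (t.+1 * N ^ m <= N ^ n)%N.
  by rewrite (leq_trans (leq_mul t_lt (leqnn _))) // -expnS leq_pexp2l.
rewrite /maxH; apply: bigmax_nat_dominated => [|i /andP[i_gt0 i_le]].
  by rewrite muln_gt0 expn_gt0 N_gt0 block_le.
have [k /andP[k_gt0 k_le] le_k] :=
  energy_dominated_by_prefix _ _ _ _ N_gt0 (ltW hJ) m t i hN m_lt t_lt.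
exists k; first by rewrite k_gt0 k_le.
have k_le_top := leq_trans k_le block_le.
by rewrite (hamiltonian_gamma _ _ _ _ N_gt0 _ _ i_le)
  (hamiltonian_gamma _ _ _ _ N_gt0 _ _ k_le_top) lerD2l.
Qed.
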